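(* Let $f(x,y,z)=xyz(x+y+z)$ on $\mathbb{R}^3$. Then the index cone of $f$ is nonempty, and the surface $M=\{f=1\}$ inside the index cone, with the Riemannian metric given by restricting $-\frac{1}{12}\,\partial^2 f/\partial x_i\partial x_j$, has positive curvature everywhere.
   Context: For a real form $f$ of degree $d$ on $\mathbb{R}^n$, the index cone is the set of points $x$ where $f(x)>0$ and the Hessian matrix $(\partial^2 f/\partial x_i\partial x_j)(x)$ has signature $(1,n-1)$. On the hypersurface $\{f=1\}$ in the index cone, the restriction of $-\frac{1}{d(d-1)}\partial^2 f/\partial x_i\partial x_j$ is a Riemannian metric (here $d=4$). *)

From Stdlib Require Import Reals.
From Coquelicot Require Import Coquelicot.
Open Scope R_scope.

Definition R3 := (R * R * R)%type.

(** i-th coordinate (i = 0,1,2; indices >= 2 give the last one). *)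
Definition coord (p : R3) (i : nat) : R :=
  match i with
  | O => fst (fst p)
  | S O => snd (fst p)
  | _ => snd p
  end.

Definition shift (p : R3) (i : nat) (t : R) : R3 :=
  match i with
  | O => (fst (fst p) + t, snd (fst p), snd p)
  | S O => (fst (fst p), snd (fst p) + t, snd p)
  | _ => (fst (fst p), snd (fst p), snd p + t)
  end.

Definition partial3 (F : R3 -> R) (i : nat) (p : R3) : R :=
  Derive (fun t => F (shift p i t)) 0.

Definition hessian3 (F : R3 -> R) (p : R3) (i j : nat) : R :=
  partial3 (partial3 F j) i p.

Definition qform3 (H : nat -> nat -> R) (a b : R3) : R :=
  sum_f_R0 (fun i => sum_f_R0 (fun j => H i j * coord a i * coord b j) 2) 2.

Definition det3 (a b c : R3) : R :=
  coord a 0 * (coord b 1 * coord c 2 - coord b 2 * coord c 1)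
  - coord b 0 * (coord a 1 * coord c 2 - coord a 2 * coord c 1)
  + coord c 0 * (coord a 1 * coord b 2 - coord a 2 * coord b 1).

(** A symmetric form H on R^3 has signature (1, 2) (= (1, n-1) for n = 3):
    there is a basis of R^3 in which H is diagonal with one positive and
    two negative diagonal entries (well defined by Sylvester's law). *)
Definition signature_1_2 (H : nat -> nat -> R) : Prop :=
  exists v1 v2 v3 : R3,
    det3 v1 v2 v3 <> 0 /\
    qform3 H v1 v2 = 0 /\ qform3 H v1 v3 = 0 /\ qform3 H v2 v3 = 0 /\
    qform3 H v1 v1 > 0 /\ qform3 H v2 v2 < 0 /\ qform3 H v3 v3 < 0.

Definition index_cone (F : R3 -> R) (p : R3) : Prop :=
  F p > 0 /\ signature_1_2 (hessian3 F p).

Definition on_M (F : R3 -> R) (p : R3) : Prop :=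
  F p = 1 /\ index_cone F p.

Definition hess_metric (F : R3 -> R) (d : nat) (p : R3) (a b : R3) : R :=
  - / (INR d * (INR d - 1)) * qform3 (hessian3 F p) a b.

Definition f_xyz (p : R3) : R :=
  let '(x, y, z) := p in x * y * z * (x + y + z).

Definition pdu (h : R -> R -> R) (u v : R) : R := Derive (fun t => h t v) u.
Definition pdv (h : R -> R -> R) (u v : R) : R := Derive (fun t => h u t) v.

Fixpoint Ck (k : nat) (h : R -> R -> R) (D : R -> R -> Prop) : Prop :=
  match k with
  | O => forall u v, D u v -> continuous (fun p : R * R => h (fst p) (snd p)) (u, v)
  | S k' =>
      (forall u v, D u v -> ex_derive (fun t => h t v) u /\ ex_derive (fun t => h u t) v)
      /\ Ck k' h D /\ Ck k' (pdu h) D /\ Ck k' (pdv h) D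
  end.

Definition open_disc (u0 v0 r : R) (u v : R) : Prop :=
  (u - u0) ^ 2 + (v - v0) ^ 2 < r ^ 2.

Definition phi_u (phi : R -> R -> R3) (u v : R) : R3 :=
  (pdu (fun a b => coord (phi a b) 0) u v,
   pdu (fun a b => coord (phi a b) 1) u v,
   pdu (fun a b => coord (phi a b) 2) u v).
Definition phi_v (phi : R -> R -> R3) (u v : R) : R3 :=
  (pdv (fun a b => coord (phi a b) 0) u v,
   pdv (fun a b => coord (phi a b) 1) u v,
   pdv (fun a b => coord (phi a b) 2) u v).

(** Cross product (immersion condition: phi_u x phi_v <> 0). *)
Definition cross (a b : R3) : R3 :=
  (coord a 1 * coord b 2 - coord a 2 * coord b 1,
   coord a 2 * coord b 0 - coord a 0 * coord b 2,
   coord a 0 * coord b 1 - coord a 1 * coord b 0).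

Definition coefE F d phi u v := hess_metric F d (phi u v) (phi_u phi u v) (phi_u phi u v).
Definition coefF F d phi u v := hess_metric F d (phi u v) (phi_u phi u v) (phi_v phi u v).
Definition coefG F d phi u v := hess_metric F d (phi u v) (phi_v phi u v) (phi_v phi u v).

Definition det33 (a11 a12 a13 a21 a22 a23 a31 a32 a33 : R) : R :=
  a11 * (a22 * a33 - a23 * a32) - a12 * (a21 * a33 - a23 * a31)
  + a13 * (a21 * a32 - a22 * a31).

(** Gaussian curvature at (u, v) of the metric E du^2 + 2F du dv + G dv^2
    in the local coordinates given by phi (Brioschi formula). *)
Definition gauss_curvature (F : R3 -> R) (d : nat) (phi : R -> R -> R3) (u v : R) : R :=
  let E := coefE F d phi in
  let Fc := coefF F d phi in
  let G := coefG F d phi in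
  ( det33 (- / 2 * pdv (pdv E) u v + pdv (pdu Fc) u v - / 2 * pdu (pdu G) u v)
          (/ 2 * pdu E u v) (pdu Fc u v - / 2 * pdv E u v)
          (pdv Fc u v - / 2 * pdu G u v) (E u v) (Fc u v)
          (/ 2 * pdv G u v) (Fc u v) (G u v)
  - det33 0 (/ 2 * pdv E u v) (/ 2 * pdu G u v)
          (/ 2 * pdv E u v) (E u v) (Fc u v)
          (/ 2 * pdu G u v) (Fc u v) (G u v) )
  / (E u v * G u v - Fc u v ^ 2) ^ 2.

From Stdlib Require Import Reals Lra Psatz.
From Coquelicot Require Import Coquelicot.
Open Scope R_scope.

(* Put xi = (log x, log y, log z, log (x + y + z)), so that log f = xi0 + xi1 + xi2 + xi3.
   Writing v' = dxi(v), one has Df(p)v = f sum v' and D2f(p)(v, w) = f (sum v' sum w' - v'.w').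
   Tangent vectors of M satisfy sum v' = 0, so the metric -D2f/12 is |dxi|^2/12: xi maps M
   isometrically, up to the factor 1/12, onto a surface in the Euclidean 3-space
   {sum xi = 0}, lying on the hypersurface l(xi) = e^xi0 + e^xi1 + e^xi2 - e^xi3 = 0.
   By Gauss's equation the numerator of the Brioschi formula is the determinant of the
   second fundamental form, whose normal part is -D2l.  On the tangent plane this
   determinant equals xyz m^2 / (x + y + z) = f m^2 / (x + y + z)^2 > 0, where the minor m
   of the matrix (1, phi_u', phi_v') is nonzero because phi is an immersion. *)

(** * Derivatives of f *)

Definition Df (p v : R3) : R :=
  let x := coord p 0 in let y := coord p 1 in let z := coord p 2 in
  y * z * (2 * x + y + z) * coord v 0 + x * z * (x + 2 * y + z) * coord v 1
  + x * y * (x + y + 2 * z) * coord v 2.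

Definition D2f (p v w : R3) : R :=
  let x := coord p 0 in let y := coord p 1 in let z := coord p 2 in
  let v0 := coord v 0 in let v1 := coord v 1 in let v2 := coord v 2 in
  let w0 := coord w 0 in let w1 := coord w 1 in let w2 := coord w 2 in
  2 * y * z * v0 * w0 + 2 * x * z * v1 * w1 + 2 * x * y * v2 * w2
  + z * (2 * x + 2 * y + z) * (v0 * w1 + v1 * w0)
  + y * (2 * x + y + 2 * z) * (v0 * w2 + v2 * w0)
  + x * (x + 2 * y + 2 * z) * (v1 * w2 + v2 * w1).

(* f is a quartic form, so D3f(p)(s, v, w) = polar_f p s v w and D4f = polar_f. *)
Definition polar_f (r s v w : R3) : R :=
  let r0 := coord r 0 in let r1 := coord r 1 in let r2 := coord r 2 in
  let s0 := coord s 0 in let s1 := coord s 1 in let s2 := coord s 2 in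
  let v0 := coord v 0 in let v1 := coord v 1 in let v2 := coord v 2 in
  let w0 := coord w 0 in let w1 := coord w 1 in let w2 := coord w 2 in
  2 * (s1 * r2 + r1 * s2) * v0 * w0 + 2 * (s0 * r2 + r0 * s2) * v1 * w1
  + 2 * (s0 * r1 + r0 * s1) * v2 * w2
  + (s2 * (2 * r0 + 2 * r1 + r2) + r2 * (2 * s0 + 2 * s1 + s2)) * (v0 * w1 + v1 * w0)
  + (s1 * (2 * r0 + r1 + 2 * r2) + r1 * (2 * s0 + s1 + 2 * s2)) * (v0 * w2 + v2 * w0)
  + (s0 * (r0 + 2 * r1 + 2 * r2) + r0 * (s0 + 2 * s1 + 2 * s2)) * (v1 * w2 + v2 * w1).

Definition unit3 (i : nat) : R3 := shift (0, 0, 0) i 1.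

Lemma partial3_f_xyz p i : partial3 f_xyz i p = Df p (unit3 i).
Proof.
  destruct p as [[x y] z]; unfold partial3, Df, unit3.
  destruct i as [|[|i]]; cbn; apply is_derive_unique; auto_derive; auto; ring.
Qed.

Lemma hessian3_f_xyz p i j : hessian3 f_xyz p i j = D2f p (unit3 i) (unit3 j).
Proof.
  unfold hessian3, partial3 at 1.
  rewrite (Derive_ext _ (fun t => Df (shift p i t) (unit3 j)))
    by (intro; apply partial3_f_xyz).
  destruct p as [[x y] z]; unfold Df, D2f.
  destruct i as [|[|i]]; cbn; apply is_derive_unique; auto_derive; auto; ring.
Qed.

Lemma qform3_hessian3_f_xyz p a b : qform3 (hessian3 f_xyz p) a b = D2f p a b.
Proof.
  unfold qform3; cbn [sum_f_R0]; rewrite !hessian3_f_xyz.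
  destruct p as [[x y] z], a as [[a0 a1] a2], b as [[b0 b1] b2].
  unfold D2f, unit3; cbn; ring.
Qed.

Lemma hess_metric_f_xyz p a b : hess_metric f_xyz 4 p a b = - / 12 * D2f p a b.
Proof.
  unfold hess_metric; rewrite qform3_hessian3_f_xyz; cbn [INR]; field.
Qed.

Lemma index_cone_f_xyz : index_cone f_xyz (1, 1, 1).
Proof.
  split; [cbn; lra |].
  exists (1, 1, 1), (1, -1, 0), (1, 1, -2).
  rewrite !qform3_hessian3_f_xyz; unfold det3, D2f; cbn; lra.
Qed.

Definition is_derive3 (q : R -> R3) (t : R) (dq : R3) : Prop :=
  forall i, is_derive (fun s => coord (q s) i) t (coord dq i).

Ltac chain_rule :=
  auto_derive;
  [ repeat split; eexists; eassumption
  | repeat match goal with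
    | H : is_derive _ ?t ?l |- context [Derive ?g ?t] => rewrite (is_derive_unique g t l H)
    end; ring ].

(* auto_derive only differentiates real functions of a real variable, so the chain rules
   are first proved for curves given by their coordinate functions. *)
Section ChainRuleCoordinates.
Context {q0 q1 q2 s0 s1 s2 v0 v1 v2 w0 w1 w2 : R -> R}.
Context {t dq0 dq1 dq2 ds0 ds1 ds2 dv0 dv1 dv2 dw0 dw1 dw2 : R}.
Hypotheses (Hq0 : is_derive q0 t dq0) (Hq1 : is_derive q1 t dq1) (Hq2 : is_derive q2 t dq2).
Hypotheses (Hs0 : is_derive s0 t ds0) (Hs1 : is_derive s1 t ds1) (Hs2 : is_derive s2 t ds2).
Hypotheses (Hv0 : is_derive v0 t dv0) (Hv1 : is_derive v1 t dv1) (Hv2 : is_derive v2 t dv2).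
Hypotheses (Hw0 : is_derive w0 t dw0) (Hw1 : is_derive w1 t dw1) (Hw2 : is_derive w2 t dw2).

Let q r : R3 := (q0 r, q1 r, q2 r).
Let s r : R3 := (s0 r, s1 r, s2 r).
Let v r : R3 := (v0 r, v1 r, v2 r).
Let w r : R3 := (w0 r, w1 r, w2 r).
Let dq : R3 := (dq0, dq1, dq2).
Let ds : R3 := (ds0, ds1, ds2).
Let dv : R3 := (dv0, dv1, dv2).
Let dw : R3 := (dw0, dw1, dw2).

Lemma is_derive_f_xyz_coords : is_derive (fun r => f_xyz (q r)) t (Df (q t) dq).
Proof. unfold q, dq, Df; cbn; chain_rule. Qed.

Lemma is_derive_Df_coords :
  is_derive (fun r => Df (q r) (v r)) t (D2f (q t) dq (v t) + Df (q t) dv).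
Proof. unfold q, v, dq, dv, Df, D2f; cbn; chain_rule. Qed.

Lemma is_derive_D2f_coords :
  is_derive (fun r => D2f (q r) (v r) (w r)) t
    (polar_f (q t) dq (v t) (w t) + D2f (q t) dv (w t) + D2f (q t) (v t) dw).
Proof. unfold q, v, w, dq, dv, dw, D2f, polar_f; cbn; chain_rule. Qed.

Lemma is_derive_polar_f_coords :
  is_derive (fun r => polar_f (q r) (s r) (v r) (w r)) t
    (polar_f dq (s t) (v t) (w t) + polar_f (q t) ds (v t) (w t)
     + polar_f (q t) (s t) dv (w t) + polar_f (q t) (s t) (v t) dw).
Proof. unfold q, s, v, w, dq, ds, dv, dw, polar_f; cbn; chain_rule. Qed.

End ChainRuleCoordinates.

Lemma is_derive_f_xyz q t dq : is_derive3 q t dq ->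
  is_derive (fun r => f_xyz (q r)) t (Df (q t) dq).
Proof.
  intros Hq.
  apply (is_derive_ext (fun r => f_xyz (coord (q r) 0, coord (q r) 1, coord (q r) 2))).
  { intro r; now destruct (q r) as [[x y] z]. }
  exact (is_derive_f_xyz_coords (Hq 0%nat) (Hq 1%nat) (Hq 2%nat)).
Qed.

Lemma is_derive_Df q v t dq dv : is_derive3 q t dq -> is_derive3 v t dv ->
  is_derive (fun r => Df (q r) (v r)) t (D2f (q t) dq (v t) + Df (q t) dv).
Proof.
  intros Hq Hv.
  exact (is_derive_Df_coords (Hq 0%nat) (Hq 1%nat) (Hq 2%nat) (Hv 0%nat) (Hv 1%nat) (Hv 2%nat)).
Qed.

Lemma is_derive_D2f q v w t dq dv dw :
  is_derive3 q t dq -> is_derive3 v t dv -> is_derive3 w t dw ->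
  is_derive (fun r => D2f (q r) (v r) (w r)) t
    (polar_f (q t) dq (v t) (w t) + D2f (q t) dv (w t) + D2f (q t) (v t) dw).
Proof.
  intros Hq Hv Hw.
  exact (is_derive_D2f_coords (Hq 0%nat) (Hq 1%nat) (Hq 2%nat) (Hv 0%nat) (Hv 1%nat) (Hv 2%nat)
           (Hw 0%nat) (Hw 1%nat) (Hw 2%nat)).
Qed.

Lemma is_derive_polar_f q s v w t dq ds dv dw :
  is_derive3 q t dq -> is_derive3 s t ds -> is_derive3 v t dv -> is_derive3 w t dw ->
  is_derive (fun r => polar_f (q r) (s r) (v r) (w r)) t
    (polar_f dq (s t) (v t) (w t) + polar_f (q t) ds (v t) (w t)
     + polar_f (q t) (s t) dv (w t) + polar_f (q t) (s t) (v t) dw).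
Proof.
  intros Hq Hs Hv Hw.
  exact (is_derive_polar_f_coords (Hq 0%nat) (Hq 1%nat) (Hq 2%nat) (Hs 0%nat) (Hs 1%nat) (Hs 2%nat)
           (Hv 0%nat) (Hv 1%nat) (Hv 2%nat) (Hw 0%nat) (Hw 1%nat) (Hw 2%nat)).
Qed.

(** * Logarithmic coordinates *)

Definition R4 := (R * R * R * R)%type.

Definition sum4 (a : R4) : R := let '(a0, a1, a2, a3) := a in a0 + a1 + a2 + a3.

Definition dot4 (a b : R4) : R :=
  let '(a0, a1, a2, a3) := a in let '(b0, b1, b2, b3) := b in
  a0 * b0 + a1 * b1 + a2 * b2 + a3 * b3.

Lemma dot4_comm a b : dot4 a b = dot4 b a.
Proof. destruct a as [[[a0 a1] a2] a3], b as [[[b0 b1] b2] b3]; cbn; ring. Qed.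

Definition tri4 (a b c : R4) : R :=
  let '(a0, a1, a2, a3) := a in let '(b0, b1, b2, b3) := b in
  let '(c0, c1, c2, c3) := c in
  a0 * b0 * c0 + a1 * b1 * c1 + a2 * b2 * c2 + a3 * b3 * c3.

(* dlog p v is the derivative of xi at p in the direction v, and ddlog p v w vw is the
   second derivative of xi along a map with first derivatives v, w and mixed second
   derivative vw at p. *)
Definition dlog (p v : R3) : R4 :=
  let x := coord p 0 in let y := coord p 1 in let z := coord p 2 in
  (coord v 0 / x, coord v 1 / y, coord v 2 / z,
   (coord v 0 + coord v 1 + coord v 2) / (x + y + z)).

Definition ddlog (p v w vw : R3) : R4 :=
  let '(a0, a1, a2, a3) := dlog p v in let '(b0, b1, b2, b3) := dlog p w in
  let '(c0, c1, c2, c3) := dlog p vw in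
  (c0 - a0 * b0, c1 - a1 * b1, c2 - a2 * b2, c3 - a3 * b3).

Lemma f_xyz_neq0 p : f_xyz p <> 0 ->
  coord p 0 <> 0 /\ coord p 1 <> 0 /\ coord p 2 <> 0 /\ coord p 0 + coord p 1 + coord p 2 <> 0.
Proof.
  destruct p as [[x y] z]; cbn; intros H.
  repeat split; intros E; apply H; rewrite E; ring.
Qed.

Ltac dlog_field p :=
  destruct (f_xyz_neq0 p) as (? & ? & ? & ?); [assumption |];
  destruct p as [[? ?] ?];
  repeat match goal with v : R3 |- _ => destruct v as [[? ?] ?] end;
  unfold Df, D2f, polar_f, det3, dlog, sum4, dot4, tri4 in *; cbn in *; field; auto.

Lemma Df_dlog p v : f_xyz p <> 0 -> Df p v = f_xyz p * sum4 (dlog p v).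
Proof. intros. dlog_field p. Qed.

Lemma D2f_dlog p v w : f_xyz p <> 0 ->
  D2f p v w = f_xyz p * (sum4 (dlog p v) * sum4 (dlog p w) - dot4 (dlog p v) (dlog p w)).
Proof. intros. dlog_field p. Qed.

Lemma polar_f_dlog p s v w : f_xyz p <> 0 ->
  polar_f p s v w = f_xyz p *
    (sum4 (dlog p s) * sum4 (dlog p v) * sum4 (dlog p w)
     - sum4 (dlog p s) * dot4 (dlog p v) (dlog p w)
     - sum4 (dlog p v) * dot4 (dlog p s) (dlog p w)
     - sum4 (dlog p w) * dot4 (dlog p s) (dlog p v)
     + 2 * tri4 (dlog p s) (dlog p v) (dlog p w)).
Proof. intros. dlog_field p. Qed.

Lemma sum4_ddlog p v w vw :
  sum4 (ddlog p v w vw) = sum4 (dlog p vw) - dot4 (dlog p v) (dlog p w).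
Proof. unfold ddlog, dlog, sum4, dot4; ring. Qed.

Definition minor_ones (a b : R4) : R :=
  let '(a0, a1, a2, _) := a in let '(b0, b1, b2, _) := b in
  det33 1 a0 b0 1 a1 b1 1 a2 b2.

(* The 4x4 determinant with columns (1, 1, 1, 1), y, a, b. *)
Definition det4_ones (y a b : R4) : R :=
  let '(y0, y1, y2, y3) := y in let '(a0, a1, a2, a3) := a in
  let '(b0, b1, b2, b3) := b in
  det33 y1 a1 b1 y2 a2 b2 y3 a3 b3 - det33 y0 a0 b0 y2 a2 b2 y3 a3 b3
  + det33 y0 a0 b0 y1 a1 b1 y3 a3 b3 - det33 y0 a0 b0 y1 a1 b1 y2 a2 b2.

(* The Hessian at xi(p) of l(xi) = e^xi0 + e^xi1 + e^xi2 - e^xi3, which vanishes on the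
   image of xi. *)
Definition d2level (p : R3) (a b : R4) : R :=
  let '(a0, a1, a2, a3) := a in let '(b0, b1, b2, b3) := b in
  coord p 0 * a0 * b0 + coord p 1 * a1 * b1 + coord p 2 * a2 * b2
  - (coord p 0 + coord p 1 + coord p 2) * a3 * b3.

Lemma det3_dlog p a b : f_xyz p <> 0 ->
  det3 p a b = coord p 0 * coord p 1 * coord p 2 * minor_ones (dlog p a) (dlog p b).
Proof. intros. unfold minor_ones, det33. dlog_field p. Qed.

(* Both sides measure the component of a second derivative of xi normal to the tangent
   plane: differentiating l o xi = 0 twice gives Dl(ddlog p v w vw) = - D2l(dlog p v, dlog p w). *)
Lemma det4_ones_ddlog p v w vw a b : f_xyz p <> 0 ->
  (coord p 0 + coord p 1 + coord p 2) * det4_ones (ddlog p v w vw) (dlog p a) (dlog p b)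
  = d2level p (dlog p v) (dlog p w) * minor_ones (dlog p a) (dlog p b).
Proof. intros. unfold ddlog, det4_ones, d2level, minor_ones, det33. dlog_field p. Qed.

Lemma d2level_dlog_det p a b : f_xyz p <> 0 ->
  (coord p 0 + coord p 1 + coord p 2) *
    (d2level p (dlog p a) (dlog p a) * d2level p (dlog p b) (dlog p b)
     - d2level p (dlog p a) (dlog p b) ^ 2)
  = coord p 0 * coord p 1 * coord p 2 * minor_ones (dlog p a) (dlog p b) ^ 2.
Proof. intros. unfold d2level, minor_ones, det33. dlog_field p. Qed.

Definition gram2 (a b : R4) : R := dot4 a a * dot4 b b - dot4 a b ^ 2.

Definition gram3 (u w a b : R4) : R :=
  det33 (dot4 u w) (dot4 u a) (dot4 u b) (dot4 w a) (dot4 a a) (dot4 a b)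
        (dot4 w b) (dot4 a b) (dot4 b b).

(* Cauchy-Binet in the hyperplane sum4 = 0, whose unit normal is (1, 1, 1, 1) / 2. *)
Lemma gram3_det4_ones u w a b :
  sum4 u = 0 -> sum4 w = 0 -> sum4 a = 0 -> sum4 b = 0 ->
  4 * gram3 u w a b = det4_ones u a b * det4_ones w a b.
Proof.
  destruct u as [[[u0 u1] u2] u3], w as [[[w0 w1] w2] w3],
    a as [[[a0 a1] a2] a3], b as [[[b0 b1] b2] b3].
  unfold sum4; intros Hu Hw Ha Hb.
  replace u3 with (- (u0 + u1 + u2)) by lra. replace w3 with (- (w0 + w1 + w2)) by lra.
  replace a3 with (- (a0 + a1 + a2)) by lra. replace b3 with (- (b0 + b1 + b2)) by lra.
  unfold gram3, dot4, det4_ones, det33; ring.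
Qed.

Lemma gram2_pos a b : sum4 a = 0 -> sum4 b = 0 -> minor_ones a b <> 0 -> 0 < gram2 a b.
Proof.
  destruct a as [[[a0 a1] a2] a3], b as [[[b0 b1] b2] b3].
  unfold sum4, minor_ones, gram2, dot4, det33; intros Ha Hb Hm.
  replace a3 with (- (a0 + a1 + a2)) by lra. replace b3 with (- (b0 + b1 + b2)) by lra.
  set (m01 := a0 * b1 - a1 * b0) in *. set (m12 := a1 * b2 - a2 * b1) in *.
  set (m20 := a2 * b0 - a0 * b2) in *.
  replace (1 * (a1 * b2 - b1 * a2) - a0 * (1 * b2 - b1 * 1) + b0 * (1 * a2 - a1 * 1))
    with (m01 + m12 + m20) in Hm by (unfold m01, m12, m20; ring).
  replace (_ - _ ^ 2) with (m01 ^ 2 + m12 ^ 2 + m20 ^ 2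
    + (m20 - m01) ^ 2 + (m01 - m12) ^ 2 + (m12 - m20) ^ 2) by (unfold m01, m12, m20; ring).
  assert (0 < (m01 + m12 + m20) ^ 2) by (apply pow2_gt_0; exact Hm).
  assert (3 * (m01 ^ 2 + m12 ^ 2 + m20 ^ 2) - (m01 + m12 + m20) ^ 2
          = (m01 - m12) ^ 2 + (m12 - m20) ^ 2 + (m20 - m01) ^ 2) by ring.
  pose proof (pow2_ge_0 (m01 - m12)); pose proof (pow2_ge_0 (m12 - m20));
    pose proof (pow2_ge_0 (m20 - m01)).
  lra.
Qed.

(* Up to a positive factor, the determinant of the second fundamental form of xi o phi
   when phi_u = a, phi_v = b, phi_uu = A, phi_uv = B, phi_vv = C. *)
Definition det_II (p a b A B C : R3) : R :=
  det4_ones (ddlog p a a A) (dlog p a) (dlog p b) * det4_ones (ddlog p b b C) (dlog p a) (dlog p b)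
  - det4_ones (ddlog p a b B) (dlog p a) (dlog p b) ^ 2.

Lemma det_II_eq p a b A B C : f_xyz p <> 0 ->
  (coord p 0 + coord p 1 + coord p 2) ^ 4 * det_II p a b A B C
  = f_xyz p * minor_ones (dlog p a) (dlog p b) ^ 4.
Proof.
  intros Hf.
  pose proof (det4_ones_ddlog p a a A a b Hf) as HU.
  pose proof (det4_ones_ddlog p a b B a b Hf) as HV.
  pose proof (det4_ones_ddlog p b b C a b Hf) as HW.
  pose proof (d2level_dlog_det p a b Hf) as HQ.
  unfold det_II.
  set (s := coord p 0 + coord p 1 + coord p 2) in *.
  set (m := minor_ones (dlog p a) (dlog p b)) in *.
  set (dU := det4_ones (ddlog p a a A) (dlog p a) (dlog p b)) in *.
  set (dV := det4_ones (ddlog p a b B) (dlog p a) (dlog p b)) in *.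
  set (dW := det4_ones (ddlog p b b C) (dlog p a) (dlog p b)) in *.
  transitivity (s ^ 2 * ((s * dU) * (s * dW) - (s * dV) ^ 2)); [ring |].
  rewrite HU, HV, HW.
  set (Qaa := d2level p (dlog p a) (dlog p a)) in *.
  set (Qab := d2level p (dlog p a) (dlog p b)) in *.
  set (Qbb := d2level p (dlog p b) (dlog p b)) in *.
  transitivity (s * m ^ 2 * (s * (Qaa * Qbb - Qab ^ 2))); [ring |].
  rewrite HQ; unfold s; destruct p as [[x y] z]; cbn; ring.
Qed.

Lemma det_II_pos p a b A B C : f_xyz p > 0 -> minor_ones (dlog p a) (dlog p b) <> 0 ->
  0 < det_II p a b A B C.
Proof.
  intros Hf Hm.
  destruct (f_xyz_neq0 p) as (_ & _ & _ & Hs); [lra |].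
  assert (Hpow4 : forall t, t <> 0 -> 0 < t ^ 4).
  { intros t Ht; replace (t ^ 4) with ((t ^ 2) ^ 2) by ring; apply pow_lt, pow2_gt_0, Ht. }
  apply (Rmult_lt_reg_l _ _ _ (Hpow4 _ Hs)).
  rewrite Rmult_0_r, det_II_eq by lra.
  apply Rmult_lt_0_compat; [lra | exact (Hpow4 _ Hm)].
Qed.

Lemma gram3_diff_det_II p a b A B C :
  sum4 (ddlog p a a A) = 0 -> sum4 (ddlog p a b B) = 0 -> sum4 (ddlog p b b C) = 0 ->
  sum4 (dlog p a) = 0 -> sum4 (dlog p b) = 0 ->
  gram3 (ddlog p a a A) (ddlog p b b C) (dlog p a) (dlog p b)
  - gram3 (ddlog p a b B) (ddlog p a b B) (dlog p a) (dlog p b) = det_II p a b A B C / 4.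
Proof.
  intros SU SV SW Sa Sb.
  pose proof (gram3_det4_ones _ _ _ _ SU SW Sa Sb).
  pose proof (gram3_det4_ones _ _ _ _ SV SV Sa Sb).
  unfold det_II; lra.
Qed.

(* X stands for - Evv / 2 + Fuv - Guu / 2, the only way second derivatives enter. *)
Definition brioschi (E F G Eu Ev Fu Fv Gu Gv X : R) : R :=
  (det33 X (/ 2 * Eu) (Fu - / 2 * Ev) (Fv - / 2 * Gu) E F (/ 2 * Gv) F G
   - det33 0 (/ 2 * Ev) (/ 2 * Gu) (/ 2 * Ev) E F (/ 2 * Gu) F G)
  / (E * G - F ^ 2) ^ 2.

Lemma gauss_curvature_brioschi F d phi u v :
  gauss_curvature F d phi u v =
  brioschi (coefE F d phi u v) (coefF F d phi u v) (coefG F d phi u v)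
    (pdu (coefE F d phi) u v) (pdv (coefE F d phi) u v)
    (pdu (coefF F d phi) u v) (pdv (coefF F d phi) u v)
    (pdu (coefG F d phi) u v) (pdv (coefG F d phi) u v)
    (- / 2 * pdv (pdv (coefE F d phi)) u v + pdv (pdu (coefF F d phi)) u v
     - / 2 * pdu (pdu (coefG F d phi)) u v).
Proof. reflexivity. Qed.

(* Gauss's equation for a surface xi in Euclidean space with metric c |dxi|^2 and
   xi_u = a, xi_v = b, xi_uu = U, xi_uv = V, xi_vv = W. *)
Lemma brioschi_euclidean c (a b U V W : R4) E F G Eu Ev Fu Fv Gu Gv X :
  E = c * dot4 a a -> F = c * dot4 a b -> G = c * dot4 b b ->
  Eu = 2 * c * dot4 U a -> Ev = 2 * c * dot4 V a ->
  Fu = c * (dot4 U b + dot4 V a) -> Fv = c * (dot4 V b + dot4 W a) ->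
  Gu = 2 * c * dot4 V b -> Gv = 2 * c * dot4 W b ->
  X = c * (dot4 U W - dot4 V V) ->
  brioschi E F G Eu Ev Fu Fv Gu Gv X
  = c ^ 3 * (gram3 U W a b - gram3 V V a b) / (c ^ 2 * gram2 a b) ^ 2.
Proof.
  intros; subst; unfold brioschi, gram3, gram2, det33, Rdiv.
  f_equal; [field | f_equal; ring].
Qed.

Lemma brioschi_f_xyz_pos p a b A B C :
  f_xyz p = 1 -> Df p a = 0 -> Df p b = 0 ->
  D2f p a a + Df p A = 0 -> D2f p b a + Df p B = 0 -> D2f p b b + Df p C = 0 ->
  det3 p a b <> 0 ->
  brioschi (- / 12 * D2f p a a) (- / 12 * D2f p a b) (- / 12 * D2f p b b)
    (- / 12 * (polar_f p a a a + D2f p A a + D2f p a A))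
    (- / 12 * (polar_f p b a a + D2f p B a + D2f p a B))
    (- / 12 * (polar_f p a a b + D2f p A b + D2f p a B))
    (- / 12 * (polar_f p b a b + D2f p B b + D2f p a C))
    (- / 12 * (polar_f p a b b + D2f p B b + D2f p b B))
    (- / 12 * (polar_f p b b b + D2f p C b + D2f p b C))
    (- / 12 * (polar_f p a a C / 2 + polar_f p A b b / 2 - polar_f p a b B
               + D2f p A C - D2f p B B)) > 0.
Proof.
  intros Hf Ha Hb HA HB HC Hdet.
  assert (Hf0 : f_xyz p <> 0) by lra.
  rewrite Df_dlog, Hf in Ha, Hb by exact Hf0.
  rewrite Df_dlog, D2f_dlog, Hf in HA, HB, HC by exact Hf0.
  assert (Sa : sum4 (dlog p a) = 0) by lra.
  assert (Sb : sum4 (dlog p b) = 0) by lra.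
  rewrite Sa in HA, HB; rewrite Sb in HB, HC.
  assert (SA : sum4 (dlog p A) = dot4 (dlog p a) (dlog p a)) by lra.
  assert (SB : sum4 (dlog p B) = dot4 (dlog p b) (dlog p a)) by lra.
  assert (SC : sum4 (dlog p C) = dot4 (dlog p b) (dlog p b)) by lra.
  rewrite (brioschi_euclidean (/ 12) (dlog p a) (dlog p b)
             (ddlog p a a A) (ddlog p a b B) (ddlog p b b C)).
  (* Under the constraints the data are those of the Euclidean surface xi o phi. *)
  2-11: rewrite ?polar_f_dlog, ?D2f_dlog, Hf, ?Sa, ?Sb, ?SA, ?SB, ?SC by exact Hf0;
        unfold ddlog; generalize (dlog p a) (dlog p b) (dlog p A) (dlog p B) (dlog p C);
        intros [[[? ?] ?] ?] [[[? ?] ?] ?] [[[? ?] ?] ?] [[[? ?] ?] ?] [[[? ?] ?] ?];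
        unfold dot4, tri4; field.
  assert (Hm : minor_ones (dlog p a) (dlog p b) <> 0).
  { intros Hm; apply Hdet; rewrite det3_dlog, Hm by exact Hf0; ring. }
  assert (SU : sum4 (ddlog p a a A) = 0) by (rewrite sum4_ddlog, SA; ring).
  assert (SV : sum4 (ddlog p a b B) = 0) by (rewrite sum4_ddlog, SB, dot4_comm; ring).
  assert (SW : sum4 (ddlog p b b C) = 0) by (rewrite sum4_ddlog, SC; ring).
  rewrite gram3_diff_det_II by assumption.
  pose proof (det_II_pos p a b A B C ltac:(lra) Hm).
  pose proof (gram2_pos _ _ Sa Sb Hm).
  apply Rdiv_lt_0_compat.
  - apply Rmult_lt_0_compat; [apply pow_lt | ]; lra.
  - apply pow_lt, Rmult_lt_0_compat; [apply pow_lt |]; lra.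
Qed.

(** * Surfaces in M *)

Definition Ck_map (k : nat) (w : R -> R -> R3) (D : R -> R -> Prop) : Prop :=
  forall i, Ck k (fun u v => coord (w u v) i) D.

Lemma Ck_map_pred k w D : Ck_map (S k) w D -> Ck_map k w D.
Proof. intros H i; exact (proj1 (proj2 (H i))). Qed.

Lemma Ck_map_phi_u k w D : Ck_map (S k) w D -> Ck_map k (phi_u w) D.
Proof. intros H i; destruct (H i) as (_ & _ & Hu & _); destruct i as [|[|[|i]]]; exact Hu. Qed.

Lemma Ck_map_phi_v k w D : Ck_map (S k) w D -> Ck_map k (phi_v w) D.
Proof. intros H i; destruct (H i) as (_ & _ & _ & Hv); destruct i as [|[|[|i]]]; exact Hv. Qed.

Lemma Ck_map_is_derive3_u w D u v : Ck_map 1 w D -> D u v ->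
  is_derive3 (fun s => w s v) u (phi_u w u v).
Proof.
  intros H Huv i; destruct (proj1 (H i) u v Huv) as [Hu _].
  destruct i as [|[|[|i]]]; exact (Derive_correct _ _ Hu).
Qed.

Lemma Ck_map_is_derive3_v w D u v : Ck_map 1 w D -> D u v ->
  is_derive3 (fun s => w u s) v (phi_v w u v).
Proof.
  intros H Huv i; destruct (proj1 (H i) u v Huv) as [_ Hv].
  destruct i as [|[|[|i]]]; exact (Derive_correct _ _ Hv).
Qed.

Lemma pdu_pdv_comm h D u v : locally_2d D u v -> Ck 2 h D ->
  pdu (pdv h) u v = pdv (pdu h) u v.
Proof.
  intros HD (Hd & _ & (Hdu & Hcu & _ & Hcvu) & (Hdv & _ & Hcuv & _)).
  apply Schwarz.
  - apply (locally_2d_impl D); [apply locally_2d_forall |exact HD].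
    intros a b Hab; destruct (Hd a b Hab), (Hdu a b Hab), (Hdv a b Hab); tauto.
  - apply continuity_2d_pt_filterlim, Hcuv, (locally_2d_singleton _ _ _ HD).
  - apply continuity_2d_pt_filterlim, Hcvu, (locally_2d_singleton _ _ _ HD).
Qed.

Lemma phi_u_phi_v_comm w D u v : locally_2d D u v -> Ck_map 2 w D ->
  phi_u (phi_v w) u v = phi_v (phi_u w) u v.
Proof.
  intros HD H.
  assert (Hc := fun i => pdu_pdv_comm (fun a b => coord (w a b) i) D u v HD (H i)).
  unfold phi_u, phi_v; f_equal; [f_equal |];
    [exact (Hc 0%nat) | exact (Hc 1%nat) | exact (Hc 2%nat)].
Qed.

Lemma open_disc_locally_2d u0 v0 r u v :
  open_disc u0 v0 r u v -> locally_2d (open_disc u0 v0 r) u v.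
Proof.
  unfold open_disc; intros H.
  set (g a b := (a - u0) ^ 2 + (b - v0) ^ 2).
  assert (Hg : continuity_2d_pt g u v).
  { apply (continuity_2d_pt_ext (fun a b => (a - u0) * (a - u0) + (b - v0) * (b - v0)));
      [intros; unfold g; ring |].
    apply continuity_2d_pt_plus; apply continuity_2d_pt_mult; apply continuity_2d_pt_minus;
      auto using continuity_2d_pt_id1, continuity_2d_pt_id2, continuity_2d_pt_const. }
  assert (Heps : 0 < r ^ 2 - g u v) by (unfold g; lra).
  apply (locally_2d_impl (fun a b => Rabs (g a b - g u v) < mkposreal _ Heps)).
  - apply locally_2d_forall; intros a b Hab; cbn in Hab.
    apply Rabs_lt_between' in Hab; unfold g in *; lra.
  - exact (Hg (mkposreal _ Heps)).
Qed.

(* Euler's relation Df p p = 4 f p, in vector form. *)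
Lemma euler_cross p a b k :
  4 * f_xyz p * coord (cross a b) k
  = det3 p a b * Df p (unit3 k) - Df p b * coord (cross p a) k + Df p a * coord (cross p b) k.
Proof.
  destruct p as [[x y] z], a as [[a0 a1] a2], b as [[b0 b1] b2].
  unfold Df, det3, cross, unit3; destruct k as [|[|k]]; cbn; ring.
Qed.

Lemma det3_neq0_of_cross p a b : f_xyz p <> 0 -> Df p a = 0 -> Df p b = 0 ->
  cross a b <> (0, 0, 0) -> det3 p a b <> 0.
Proof.
  intros Hf Ha Hb Hc Hd; apply Hc.
  assert (Hk : forall k, coord (cross a b) k = 0).
  { intros k; pose proof (euler_cross p a b k) as E; rewrite Hd, Ha, Hb in E.
    apply (Rmult_eq_reg_l (4 * f_xyz p)); lra. }
  transitivity (coord (cross a b) 0, coord (cross a b) 1, coord (cross a b) 2).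
  - now destruct (cross a b) as [[c0 c1] c2].
  - now rewrite !Hk.
Qed.

Lemma is_derive_locally_const (g : R -> R) t c l :
  locally t (fun s => g s = c) -> is_derive g t l -> l = 0.
Proof.
  intros Hc Hg; rewrite <- (is_derive_unique _ _ _ Hg).
  rewrite (Derive_ext_loc _ (fun _ => c)) by exact Hc; apply Derive_const.
Qed.

Lemma is_derive_Rplus (f g : R -> R) t a b :
  is_derive f t a -> is_derive g t b -> is_derive (fun s => f s + g s) t (a + b).
Proof. exact (is_derive_plus f g t a b). Qed.

Section LevelSurface.

Variable D : R -> R -> Prop.
Hypothesis D_open : forall u v, D u v -> locally_2d D u v.
Variable phi : R -> R -> R3.
Hypothesis phi_C3 : Ck_map 3 phi D.
Hypothesis phi_level : forall u v, D u v -> f_xyz (phi u v) = 1.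

Local Ltac ck := auto using Ck_map_phi_u, Ck_map_phi_v, Ck_map_pred, phi_C3.

Definition metric_on (X Y : R -> R -> R3) (u v : R) : R :=
  hess_metric f_xyz 4 (phi u v) (X u v) (Y u v).
Definition D2f_on (X Y : R -> R -> R3) (u v : R) : R := D2f (phi u v) (X u v) (Y u v).
Definition polar_on (S X Y : R -> R -> R3) (u v : R) : R :=
  polar_f (phi u v) (S u v) (X u v) (Y u v).

Lemma near_u u v : D u v -> locally u (fun t => D t v).
Proof. intros Huv; exact (locally_2d_1d_const_y _ _ _ (D_open u v Huv)). Qed.

Lemma near_v u v : D u v -> locally v (fun t => D u t).
Proof. intros Huv; exact (locally_2d_1d_const_x _ _ _ (D_open u v Huv)). Qed.

Lemma is_derive_u_D2f_on X Y u v : Ck_map 1 X D -> Ck_map 1 Y D -> D u v ->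
  is_derive (fun t => D2f_on X Y t v) u
    (polar_on (phi_u phi) X Y u v + D2f_on (phi_u X) Y u v + D2f_on X (phi_u Y) u v).
Proof.
  intros; apply (is_derive_D2f (fun t => phi t v) (fun t => X t v) (fun t => Y t v));
    apply (Ck_map_is_derive3_u _ D); ck.
Qed.

Lemma is_derive_v_D2f_on X Y u v : Ck_map 1 X D -> Ck_map 1 Y D -> D u v ->
  is_derive (fun t => D2f_on X Y u t) v
    (polar_on (phi_v phi) X Y u v + D2f_on (phi_v X) Y u v + D2f_on X (phi_v Y) u v).
Proof.
  intros; apply (is_derive_D2f (fun t => phi u t) (fun t => X u t) (fun t => Y u t));
    apply (Ck_map_is_derive3_v _ D); ck.
Qed.

Lemma is_derive_u_polar_on S X Y u v :
  Ck_map 1 S D -> Ck_map 1 X D -> Ck_map 1 Y D -> D u v ->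
  is_derive (fun t => polar_on S X Y t v) u
    (polar_f (phi_u phi u v) (S u v) (X u v) (Y u v) + polar_on (phi_u S) X Y u v
     + polar_on S (phi_u X) Y u v + polar_on S X (phi_u Y) u v).
Proof.
  intros; apply (is_derive_polar_f (fun t => phi t v) (fun t => S t v) (fun t => X t v)
                   (fun t => Y t v)); apply (Ck_map_is_derive3_u _ D); ck.
Qed.

Lemma is_derive_v_polar_on S X Y u v :
  Ck_map 1 S D -> Ck_map 1 X D -> Ck_map 1 Y D -> D u v ->
  is_derive (fun t => polar_on S X Y u t) v
    (polar_f (phi_v phi u v) (S u v) (X u v) (Y u v) + polar_on (phi_v S) X Y u v
     + polar_on S (phi_v X) Y u v + polar_on S X (phi_v Y) u v).
Proof.
  intros; apply (is_derive_polar_f (fun t => phi u t) (fun t => S u t) (fun t => X u t)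
                   (fun t => Y u t)); apply (Ck_map_is_derive3_v _ D); ck.
Qed.

Lemma metric_on_eq X Y u v : metric_on X Y u v = - / 12 * D2f_on X Y u v.
Proof. apply hess_metric_f_xyz. Qed.

Lemma pdu_metric_on X Y u v : Ck_map 1 X D -> Ck_map 1 Y D -> D u v ->
  pdu (metric_on X Y) u v = - / 12 *
    (polar_on (phi_u phi) X Y u v + D2f_on (phi_u X) Y u v + D2f_on X (phi_u Y) u v).
Proof.
  intros; apply is_derive_unique.
  apply (is_derive_ext (fun t => - / 12 * D2f_on X Y t v));
    [intros; symmetry; apply metric_on_eq |].
  apply is_derive_scal, is_derive_u_D2f_on; assumption.
Qed.

Lemma pdv_metric_on X Y u v : Ck_map 1 X D -> Ck_map 1 Y D -> D u v ->
  pdv (metric_on X Y) u v = - / 12 *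
    (polar_on (phi_v phi) X Y u v + D2f_on (phi_v X) Y u v + D2f_on X (phi_v Y) u v).
Proof.
  intros; apply is_derive_unique.
  apply (is_derive_ext (fun t => - / 12 * D2f_on X Y u t));
    [intros; symmetry; apply metric_on_eq |].
  apply is_derive_scal, is_derive_v_D2f_on; assumption.
Qed.

Lemma pdv_pdv_metric_on X Y u v : Ck_map 2 X D -> Ck_map 2 Y D -> D u v ->
  pdv (pdv (metric_on X Y)) u v = - / 12 *
    (polar_f (phi_v phi u v) (phi_v phi u v) (X u v) (Y u v)
     + polar_on (phi_v (phi_v phi)) X Y u v + polar_on (phi_v phi) (phi_v X) Y u v
     + polar_on (phi_v phi) X (phi_v Y) u v
     + (polar_on (phi_v phi) (phi_v X) Y u v + D2f_on (phi_v (phi_v X)) Y u v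
        + D2f_on (phi_v X) (phi_v Y) u v)
     + (polar_on (phi_v phi) X (phi_v Y) u v + D2f_on (phi_v X) (phi_v Y) u v
        + D2f_on X (phi_v (phi_v Y)) u v)).
Proof.
  intros HX HY Huv; apply is_derive_unique.
  apply (is_derive_ext_loc (fun t => - / 12 *
    (polar_on (phi_v phi) X Y u t + D2f_on (phi_v X) Y u t + D2f_on X (phi_v Y) u t))).
  { apply (filter_imp (fun t => D u t)); [| exact (near_v u v Huv)].
    intros t Ht; symmetry; apply pdv_metric_on; ck. }
  apply is_derive_scal.
  apply is_derive_Rplus; [apply is_derive_Rplus |].
  - apply is_derive_v_polar_on; ck.
  - apply is_derive_v_D2f_on; ck.
  - apply is_derive_v_D2f_on; ck.
Qed.

Lemma pdv_pdu_metric_on X Y u v : Ck_map 2 X D -> Ck_map 2 Y D -> D u v ->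
  pdv (pdu (metric_on X Y)) u v = - / 12 *
    (polar_f (phi_v phi u v) (phi_u phi u v) (X u v) (Y u v)
     + polar_on (phi_v (phi_u phi)) X Y u v + polar_on (phi_u phi) (phi_v X) Y u v
     + polar_on (phi_u phi) X (phi_v Y) u v
     + (polar_on (phi_v phi) (phi_u X) Y u v + D2f_on (phi_v (phi_u X)) Y u v
        + D2f_on (phi_u X) (phi_v Y) u v)
     + (polar_on (phi_v phi) X (phi_u Y) u v + D2f_on (phi_v X) (phi_u Y) u v
        + D2f_on X (phi_v (phi_u Y)) u v)).
Proof.
  intros HX HY Huv; apply is_derive_unique.
  apply (is_derive_ext_loc (fun t => - / 12 *
    (polar_on (phi_u phi) X Y u t + D2f_on (phi_u X) Y u t + D2f_on X (phi_u Y) u t))).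
  { apply (filter_imp (fun t => D u t)); [| exact (near_v u v Huv)].
    intros t Ht; symmetry; apply pdu_metric_on; ck. }
  apply is_derive_scal.
  apply is_derive_Rplus; [apply is_derive_Rplus |].
  - apply is_derive_v_polar_on; ck.
  - apply is_derive_v_D2f_on; ck.
  - apply is_derive_v_D2f_on; ck.
Qed.

Lemma pdu_pdu_metric_on X Y u v : Ck_map 2 X D -> Ck_map 2 Y D -> D u v ->
  pdu (pdu (metric_on X Y)) u v = - / 12 *
    (polar_f (phi_u phi u v) (phi_u phi u v) (X u v) (Y u v)
     + polar_on (phi_u (phi_u phi)) X Y u v + polar_on (phi_u phi) (phi_u X) Y u v
     + polar_on (phi_u phi) X (phi_u Y) u v
     + (polar_on (phi_u phi) (phi_u X) Y u v + D2f_on (phi_u (phi_u X)) Y u v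
        + D2f_on (phi_u X) (phi_u Y) u v)
     + (polar_on (phi_u phi) X (phi_u Y) u v + D2f_on (phi_u X) (phi_u Y) u v
        + D2f_on X (phi_u (phi_u Y)) u v)).
Proof.
  intros HX HY Huv; apply is_derive_unique.
  apply (is_derive_ext_loc (fun t => - / 12 *
    (polar_on (phi_u phi) X Y t v + D2f_on (phi_u X) Y t v + D2f_on X (phi_u Y) t v))).
  { apply (filter_imp (fun t => D t v)); [| exact (near_u u v Huv)].
    intros t Ht; symmetry; apply pdu_metric_on; ck. }
  apply is_derive_scal.
  apply is_derive_Rplus; [apply is_derive_Rplus |].
  - apply is_derive_u_polar_on; ck.
  - apply is_derive_u_D2f_on; ck.
  - apply is_derive_u_D2f_on; ck.
Qed.

Lemma phi_u_ext_on w1 w2 u v : (forall a b, D a b -> w1 a b = w2 a b) -> D u v ->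
  phi_u w1 u v = phi_u w2 u v.
Proof.
  intros Hw Huv.
  assert (Hloc : forall i, locally u (fun t => coord (w1 t v) i = coord (w2 t v) i)).
  { intros i; apply (filter_imp (fun t => D t v));
      [intros t Ht; now rewrite Hw | exact (near_u u v Huv)]. }
  unfold phi_u, pdu; f_equal; [f_equal |]; apply Derive_ext_loc, Hloc.
Qed.

Lemma phi_v_ext_on w1 w2 u v : (forall a b, D a b -> w1 a b = w2 a b) -> D u v ->
  phi_v w1 u v = phi_v w2 u v.
Proof.
  intros Hw Huv.
  assert (Hloc : forall i, locally v (fun t => coord (w1 u t) i = coord (w2 u t) i)).
  { intros i; apply (filter_imp (fun t => D u t));
      [intros t Ht; now rewrite Hw | exact (near_v u v Huv)]. }
  unfold phi_v, pdv; f_equal; [f_equal |]; apply Derive_ext_loc, Hloc.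
Qed.

Lemma phi_uv_comm u v : D u v -> phi_u (phi_v phi) u v = phi_v (phi_u phi) u v.
Proof. intros Huv; apply (phi_u_phi_v_comm _ D); [apply D_open, Huv | ck]. Qed.

Lemma phi_uvv_comm u v : D u v -> phi_v (phi_u (phi_v phi)) u v = phi_v (phi_v (phi_u phi)) u v.
Proof. intros Huv; apply phi_v_ext_on; [exact phi_uv_comm | exact Huv]. Qed.

Lemma phi_uuv_comm u v : D u v -> phi_u (phi_u (phi_v phi)) u v = phi_v (phi_u (phi_u phi)) u v.
Proof.
  intros Huv; rewrite (phi_u_ext_on _ _ u v phi_uv_comm Huv).
  apply (phi_u_phi_v_comm _ D); [apply D_open, Huv | ck].
Qed.

Lemma egregium_combination_on u v : D u v ->
  - / 2 * pdv (pdv (metric_on (phi_u phi) (phi_u phi))) u v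
  + pdv (pdu (metric_on (phi_u phi) (phi_v phi))) u v
  - / 2 * pdu (pdu (metric_on (phi_v phi) (phi_v phi))) u v
  = - / 12 *
    (polar_f (phi u v) (phi_u phi u v) (phi_u phi u v) (phi_v (phi_v phi) u v) / 2
     + polar_f (phi u v) (phi_u (phi_u phi) u v) (phi_v phi u v) (phi_v phi u v) / 2
     - polar_f (phi u v) (phi_u phi u v) (phi_v phi u v) (phi_v (phi_u phi) u v)
     + D2f (phi u v) (phi_u (phi_u phi) u v) (phi_v (phi_v phi) u v)
     - D2f (phi u v) (phi_v (phi_u phi) u v) (phi_v (phi_u phi) u v)).
Proof.
  intros Huv.
  rewrite pdv_pdv_metric_on, pdv_pdu_metric_on, pdu_pdu_metric_on by ck.
  unfold polar_on, D2f_on.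
  rewrite (phi_uv_comm u v Huv), (phi_uvv_comm u v Huv), (phi_uuv_comm u v Huv).
  (* The third derivatives of phi cancel: Theorema Egregium. *)
  generalize (phi u v) (phi_u phi u v) (phi_v phi u v) (phi_u (phi_u phi) u v)
    (phi_v (phi_u phi) u v) (phi_v (phi_v phi) u v) (phi_v (phi_v (phi_u phi)) u v)
    (phi_v (phi_u (phi_u phi)) u v).
  intros [[? ?] ?] [[? ?] ?] [[? ?] ?] [[? ?] ?] [[? ?] ?] [[? ?] ?] [[? ?] ?] [[? ?] ?].
  unfold polar_f, D2f; cbn; field.
Qed.

Lemma Df_phi_u_eq0 u v : D u v -> Df (phi u v) (phi_u phi u v) = 0.
Proof.
  intros Huv; apply (is_derive_locally_const (fun t => f_xyz (phi t v)) u 1).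
  - apply (filter_imp (fun t => D t v)); [exact (fun t => phi_level t v) | exact (near_u u v Huv)].
  - apply (is_derive_f_xyz (fun t => phi t v)), (Ck_map_is_derive3_u _ D); ck.
Qed.

Lemma Df_phi_v_eq0 u v : D u v -> Df (phi u v) (phi_v phi u v) = 0.
Proof.
  intros Huv; apply (is_derive_locally_const (fun t => f_xyz (phi u t)) v 1).
  - apply (filter_imp (fun t => D u t)); [exact (phi_level u) | exact (near_v u v Huv)].
  - apply (is_derive_f_xyz (fun t => phi u t)), (Ck_map_is_derive3_v _ D); ck.
Qed.

Lemma D2f_Df_u_eq0 X u v : Ck_map 1 X D -> (forall a b, D a b -> Df (phi a b) (X a b) = 0) ->
  D u v -> D2f (phi u v) (phi_u phi u v) (X u v) + Df (phi u v) (phi_u X u v) = 0.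
Proof.
  intros HX HX0 Huv; apply (is_derive_locally_const (fun t => Df (phi t v) (X t v)) u 0).
  - apply (filter_imp (fun t => D t v)); [exact (fun t => HX0 t v) | exact (near_u u v Huv)].
  - apply (is_derive_Df (fun t => phi t v) (fun t => X t v)); apply (Ck_map_is_derive3_u _ D); ck.
Qed.

Lemma D2f_Df_v_eq0 X u v : Ck_map 1 X D -> (forall a b, D a b -> Df (phi a b) (X a b) = 0) ->
  D u v -> D2f (phi u v) (phi_v phi u v) (X u v) + Df (phi u v) (phi_v X u v) = 0.
Proof.
  intros HX HX0 Huv; apply (is_derive_locally_const (fun t => Df (phi u t) (X u t)) v 0).
  - apply (filter_imp (fun t => D u t)); [exact (HX0 u) | exact (near_v u v Huv)].
  - apply (is_derive_Df (fun t => phi u t) (fun t => X u t)); apply (Ck_map_is_derive3_v _ D); ck.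
Qed.

Lemma gauss_curvature_level_pos u v : D u v ->
  cross (phi_u phi u v) (phi_v phi u v) <> (0, 0, 0) -> gauss_curvature f_xyz 4 phi u v > 0.
Proof.
  intros Huv Hcross.
  rewrite gauss_curvature_brioschi.
  change (coefE f_xyz 4 phi) with (metric_on (phi_u phi) (phi_u phi)).
  change (coefF f_xyz 4 phi) with (metric_on (phi_u phi) (phi_v phi)).
  change (coefG f_xyz 4 phi) with (metric_on (phi_v phi) (phi_v phi)).
  rewrite egregium_combination_on, !metric_on_eq, !pdu_metric_on, !pdv_metric_on by ck.
  unfold polar_on, D2f_on; rewrite (phi_uv_comm u v Huv).
  pose proof (Df_phi_u_eq0 u v Huv) as Ha; pose proof (Df_phi_v_eq0 u v Huv) as Hb.
  apply brioschi_f_xyz_pos; auto.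
  - apply D2f_Df_u_eq0; [ck | exact Df_phi_u_eq0 | exact Huv].
  - apply D2f_Df_v_eq0; [ck | exact Df_phi_u_eq0 | exact Huv].
  - apply D2f_Df_v_eq0; [ck | exact Df_phi_v_eq0 | exact Huv].
  - apply det3_neq0_of_cross; auto; rewrite phi_level by exact Huv; lra.
Qed.

End LevelSurface.

Theorem lemma4p1 :
  (exists p : R3, index_cone f_xyz p) /\
  (forall (phi : R -> R -> R3) (u0 v0 r : R),
     0 < r ->
     (forall i : nat, Ck 3 (fun u v => coord (phi u v) i) (open_disc u0 v0 r)) ->
     (forall u v, open_disc u0 v0 r u v -> on_M f_xyz (phi u v)) ->
     cross (phi_u phi u0 v0) (phi_v phi u0 v0) <> (0, 0, 0) ->
     gauss_curvature f_xyz 4 phi u0 v0 > 0).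
Proof.
  split.
  - exists (1, 1, 1); exact index_cone_f_xyz.
  - intros phi u0 v0 r Hr HCk HM Hcross.
    apply (gauss_curvature_level_pos (open_disc u0 v0 r)); auto.
    + apply open_disc_locally_2d.
    + intros u v Huv; apply (HM u v Huv).
    + unfold open_disc; nra.
Qed.
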